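(* Consider a finite reward-free MDP with occupancy polytope $\Phi$. Let $\mathcal D=\{(d_e^k,\epsilon^k)\}_{k=1}^K$ with $K\ge1$, $d_e^k\in\Phi$, $\epsilon^k\ge0$, and let $d_e'\in\Phi$. Let $\mathcal Z_{\mathcal D}:=\bigcup_{k=1}^K\mathrm{supp}(d_e^k)$ and $\alpha(d_e',\mathcal D):=\sum_{(s,a)\notin\mathcal Z_{\mathcal D}}d_e'(s,a)$. Then there exists a reward $r_{\mathcal Z}\in\mathcal R(\mathcal D)$ such that \[\mathrm{subopt}(r_{\mathcal Z},d_e')=\frac{\alpha(d_e',\mathcal D)}{|\mathcal Z_{\mathcal D}|}.\]
   Context: The MDP has finite $S$, $A$, transitions $P$, initial distribution $\mu_0$, discount $\gamma\in(0,1)$; $(Md)(s)=\sum_a d(s,a)-\gamma\sum_{s',a'}P(s\mid s',a')d(s',a')$ and $\Phi=\{d\ge0:Md=(1-\gamma)\mu_0\}$. Rewards are $r\in\Delta(S\times A)$ (probability simplex). $\mathrm{subopt}(r,d):=\max_{\tilde d\in\Phi}r^\top\tilde d-r^\top d$. $\mathcal R(\mathcal D):=\{r\in\Delta(S\times A):\mathrm{subopt}(r,d_e^k)\le\epsilon^k\ \forall k\}$. $\mathrm{supp}(d)=\{(s,a):d(s,a)\ne0\}$. *)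

From HB Require Import structures.
From mathcomp Require Import all_boot all_order all_algebra.
From mathcomp Require Import mathcomp_extra boolp classical_sets reals.
Set Implicit Arguments. Unset Strict Implicit. Unset Printing Implicit Defensive.
Import Order.TTheory GRing.Theory Num.Theory.
Local Open Scope ring_scope.
Local Open Scope classical_set_scope.

Section MDP.
Variables (R : realType) (S A : finType).

(* P s' a' s = P(s | s', a') *)
Definition is_transition (P : S -> A -> S -> R) : Prop :=
  (forall s' a' s, 0 <= P s' a' s) /\ (forall s' a', \sum_(s : S) P s' a' s = 1).

Definition is_distr_S (mu0 : S -> R) : Prop :=
  (forall s, 0 <= mu0 s) /\ \sum_(s : S) mu0 s = 1.

Definition Mop (P : S -> A -> S -> R) (gamma : R) (d : S -> A -> R) (s : S) : R :=
  \sum_(a : A) d s a - gamma * \sum_(s' : S) \sum_(a' : A) P s' a' s * d s' a'.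

Definition Phi (P : S -> A -> S -> R) (mu0 : S -> R) (gamma : R) : set (S -> A -> R) :=
  [set d | (forall s a, 0 <= d s a) /\
           (forall s, Mop P gamma d s = (1 - gamma) * mu0 s)].

Definition inner (r d : S -> A -> R) : R := \sum_(s : S) \sum_(a : A) r s a * d s a.

Definition in_simplex (r : S -> A -> R) : Prop :=
  (forall s a, 0 <= r s a) /\ \sum_(s : S) \sum_(a : A) r s a = 1.

(* subopt(r,d) = max_{d~ in Phi} r^T d~ - r^T d  (max taken as sup; it is attained) *)
Definition subopt P mu0 gamma (r d : S -> A -> R) : R :=
  sup [set inner r dt | dt in Phi P mu0 gamma] - inner r d.

Definition feasible_rewards P mu0 gamma (K : nat) (de : 'I_K -> S -> A -> R)
    (eps : 'I_K -> R) : set (S -> A -> R) :=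
  [set r | in_simplex r /\ forall k, subopt P mu0 gamma r (de k) <= eps k].

Definition ZD (K : nat) (de : 'I_K -> S -> A -> R) : {set S * A} :=
  [set x | [exists k, de k x.1 x.2 != 0]].

Definition alpha (K : nat) (d' : S -> A -> R) (de : 'I_K -> S -> A -> R) : R :=
  \sum_(x in ~: ZD de) d' x.1 x.2.

End MDP.

From HB Require Import structures.
From mathcomp Require Import all_boot all_order all_algebra.
From mathcomp Require Import mathcomp_extra boolp classical_sets reals.
Set Implicit Arguments. Unset Strict Implicit. Unset Printing Implicit Defensive.
Import Order.TTheory GRing.Theory Num.Theory.
Local Open Scope ring_scope.
Local Open Scope classical_set_scope.

(* Summing the flow constraints over all states shows that every occupancy
   measure has total mass 1.  Let Z be the union of the expert supports and
   let r be the uniform reward 1/|Z| on Z.  Then r^T d = (mass of d on Z)/|Z|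
   is at most 1/|Z|, with equality for each expert d_e^k, so every expert is
   optimal for r (hence r is feasible) while d_e' loses exactly its mass
   outside Z, divided by |Z|. *)

Section OccupancyMass.
Variables (R : realType) (S A : finType) (P : S -> A -> S -> R).

Lemma sum_Mop (gamma : R) (d : S -> A -> R) :
  (forall s' a', \sum_(s : S) P s' a' s = 1) ->
  \sum_(s : S) Mop P gamma d s = (1 - gamma) * \sum_(x : S * A) d x.1 x.2.
Proof.
move=> P_sum1; rewrite /Mop sumrB -mulr_sumr -pair_bigA /= mulrBl mul1r.
congr (_ - gamma * _); rewrite exchange_big; apply: eq_bigr => s' _.
by rewrite exchange_big; apply: eq_bigr => a' _; rewrite -mulr_suml P_sum1 mul1r.
Qed.

Lemma Phi_mass (mu0 : S -> R) (gamma : R) (d : S -> A -> R) :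
  is_transition P -> is_distr_S mu0 -> gamma != 1 ->
  Phi P mu0 gamma d -> \sum_(x : S * A) d x.1 x.2 = 1.
Proof.
move=> [_ P_sum1] [_ mu0_sum1] gamma_neq1 [_ dM].
have gammaB_neq0 : 1 - gamma != 0 by rewrite subr_eq0 eq_sym.
apply: (mulfI gammaB_neq0); rewrite -sum_Mop // (eq_bigr _ (fun s _ => dM s)).
by rewrite -mulr_sumr mu0_sum1.
Qed.

End OccupancyMass.

Section UniformReward.
Variables (R : realType) (S A : finType) (Z : {set S * A}).

Definition supported_in (d : S -> A -> R) : Prop :=
  forall x, x \notin Z -> d x.1 x.2 = 0.

Definition unif_reward : S -> A -> R :=
  fun s a => if (s, a) \in Z then #|Z|%:R^-1 else 0.

Lemma sum_split_in (d : S -> A -> R) :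
  \sum_(x : S * A) d x.1 x.2 = \sum_(x in Z) d x.1 x.2 + \sum_(x in ~: Z) d x.1 x.2.
Proof. by rewrite (bigID (mem Z)) /=; congr (_ + _); apply: eq_bigl => x; rewrite inE. Qed.

Lemma sum_out_supported (d : S -> A -> R) :
  supported_in d -> \sum_(x in ~: Z) d x.1 x.2 = 0.
Proof. by move=> dZ; apply: big1 => x; rewrite inE; exact: dZ. Qed.

Lemma sum_in_supported (d : S -> A -> R) :
  supported_in d -> \sum_(x in Z) d x.1 x.2 = \sum_(x : S * A) d x.1 x.2.
Proof. by move=> dZ; rewrite sum_split_in sum_out_supported // addr0. Qed.

Lemma supported_neq_set0 (d : S -> A -> R) :
  supported_in d -> \sum_(x : S * A) d x.1 x.2 = 1 -> Z != finset.set0.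
Proof.
move=> dZ; rewrite -sum_in_supported //.
by apply: contra_eqN => /eqP ->; rewrite big_set0 eq_sym oner_eq0.
Qed.

Lemma inner_unif_reward (d : S -> A -> R) :
  inner unif_reward d = #|Z|%:R^-1 * \sum_(x in Z) d x.1 x.2.
Proof.
rewrite /inner pair_bigA /= [in RHS]big_mkcond /= mulr_sumr.
by apply: eq_bigr => -[s a] _; rewrite /unif_reward /=; case: ifP; rewrite ?mulr0 ?mul0r.
Qed.

Lemma unif_reward_simplex : Z != finset.set0 -> in_simplex unif_reward.
Proof.
move=> Z_neq0; have Z_gt0 : (0 < #|Z|)%N by rewrite card_gt0.
split=> [s a|]; first by rewrite /unif_reward; case: ifP; rewrite ?invr_ge0.
rewrite pair_bigA /= big_mkcond /=.
rewrite (eq_bigr (fun x => if x \in Z then #|Z|%:R^-1 else 0)); last by case.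
by rewrite -big_mkcond /= sumr_const -[_^-1 *+ _]mulr_natr mulVf // pnatr_eq0 -lt0n.
Qed.

Lemma inner_unif_reward_le (d : S -> A -> R) :
  (forall s a, 0 <= d s a) -> \sum_(x : S * A) d x.1 x.2 = 1 ->
  inner unif_reward d <= #|Z|%:R^-1.
Proof.
move=> d_ge0 d_mass; rewrite inner_unif_reward -[leRHS]mulr1 ler_wpM2l ?invr_ge0 //.
by rewrite -d_mass sum_split_in lerDl; apply: sumr_ge0 => x _; exact: d_ge0.
Qed.

Lemma sup_inner_unif_reward (D : set (S -> A -> R)) (d0 : S -> A -> R) :
  (forall d, D d -> (forall s a, 0 <= d s a) /\ \sum_(x : S * A) d x.1 x.2 = 1) ->
  D d0 -> supported_in d0 ->
  sup [set inner unif_reward d | d in D] = #|Z|%:R^-1.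
Proof.
move=> D_distr D_d0 d0Z.
have ub : ubound [set inner unif_reward d | d in D] #|Z|%:R^-1.
  by move=> _ [d /D_distr [d_ge0 d_mass] <-]; exact: inner_unif_reward_le.
apply/eqP; rewrite eq_le; apply/andP; split.
  by apply: ge_sup => //; exists (inner unif_reward d0), d0.
have <- : inner unif_reward d0 = #|Z|%:R^-1.
  have [_ d0_mass] := D_distr _ D_d0.
  by rewrite inner_unif_reward sum_in_supported // d0_mass mulr1.
by apply: ub_le_sup; [exists #|Z|%:R^-1 | exists d0].
Qed.

End UniformReward.

Arguments supported_in {R S A} Z d.
Arguments unif_reward {R S A} Z.

Lemma subopt_unif_reward (R : realType) (S A : finType)
    (P : S -> A -> S -> R) (mu0 : S -> R) (gamma : R) (Z : {set S * A})
    (d0 d : S -> A -> R) :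
  is_transition P -> is_distr_S mu0 -> gamma != 1 ->
  Phi P mu0 gamma d0 -> supported_in Z d0 -> Phi P mu0 gamma d ->
  subopt P mu0 gamma (unif_reward Z) d = #|Z|%:R^-1 * \sum_(x in ~: Z) d x.1 x.2.
Proof.
move=> HP Hmu0 gamma_neq1 Phi_d0 d0Z Phi_d.
have Phi_distr dt : Phi P mu0 gamma dt ->
    (forall s a, 0 <= dt s a) /\ \sum_(x : S * A) dt x.1 x.2 = 1.
  by move=> Phi_dt; split; [exact: Phi_dt.1 | exact: Phi_mass Phi_dt].
rewrite /subopt (sup_inner_unif_reward Phi_distr Phi_d0 d0Z) inner_unif_reward.
rewrite -[X in X - _]mulr1 -(Phi_mass HP Hmu0 gamma_neq1 Phi_d) (sum_split_in Z).
by rewrite -mulrBr addrAC subrr add0r.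
Qed.

Lemma ZD_supported (R : realType) (S A : finType) (K : nat)
    (de : 'I_K -> S -> A -> R) (k : 'I_K) :
  supported_in (ZD de) (de k).
Proof. by move=> x; rewrite inE => /existsPn /(_ k); rewrite negbK => /eqP. Qed.

Theorem mainTheorem4 (R : realType) (S A : finType)
  (P : S -> A -> S -> R) (mu0 : S -> R) (gamma : R)
  (HP : is_transition P) (Hmu0 : is_distr_S mu0)
  (Hg0 : 0 < gamma) (Hg1 : gamma < 1)
  (K : nat) (HK : (0 < K)%N)
  (de : 'I_K -> S -> A -> R) (eps : 'I_K -> R)
  (Hde : forall k, Phi P mu0 gamma (de k)) (Heps : forall k, 0 <= eps k)
  (d' : S -> A -> R) (Hd' : Phi P mu0 gamma d') :
  exists rZ : S -> A -> R,
    feasible_rewards P mu0 gamma de eps rZ /\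
    subopt P mu0 gamma rZ d' = alpha d' de / (#|ZD de|)%:R.
Proof.
have gamma_neq1 : gamma != 1 by rewrite lt_eqF.
pose k0 : 'I_K := Ordinal HK.
have de_supp k : supported_in (ZD de) (de k) := ZD_supported k.
have subopt_unif := subopt_unif_reward HP Hmu0 gamma_neq1 (Hde k0) (de_supp k0).
exists (unif_reward (ZD de)); split; first split.
- apply/unif_reward_simplex/(supported_neq_set0 (de_supp k0)).
  exact: Phi_mass HP Hmu0 gamma_neq1 (Hde k0).
- by move=> k; rewrite subopt_unif // (sum_out_supported (de_supp k)) mulr0.
- by rewrite subopt_unif // mulrC.
Qed.
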